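(* Let $p$ be prime, $\mathbb{F}=\mathbb{F}_p$, $n\le N$, and let $\lambda=(\lambda_0,\lambda_1,\dots,\lambda_k)$ be an ordered partition of $[n]$ into pairwise disjoint, possibly empty sets. For $y_1,\dots,y_k\in\mathbb{F}^N$ let $P(x)=\mathcal{F}_{\lambda}(x,y_1,\dots,y_k)$. Then for every $z\in\mathbb{F}^N$, $$P_z(x)=\sum_{A\subseteq\lambda_0,\ A\ne\lambda_0}\mathcal{F}_{(A,\lambda_0\setminus A,\lambda_1,\dots,\lambda_k)}(x,z,y_1,\dots,y_k).$$
   Context: For an ordered partition $\mu=(\mu_0,\dots,\mu_k)$ of $[n]$ (blocks pairwise disjoint, possibly empty, union $[n]$) and vectors $r_0,\dots,r_k\in\mathbb{F}^N$, define $\mathcal{F}_{\mu}(r_0,\dots,r_k)=\sum_{1\le j_1<j_2<\dots<j_n\le N}\prod_{i=1}^n w_i(j_i)$, where $w_i=r_t$ for the unique $t$ with $i\in\mu_t$, and $r(j)$ denotes the $j$-th coordinate of $r$. The derivative is $P_z(x)=P(x+z)-P(x)$. *)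

From HB Require Import structures.
From mathcomp Require Import all_boot all_order all_algebra.
Set Implicit Arguments. Unset Strict Implicit. Unset Printing Implicit Defensive.
Import GRing.Theory.
Local Open Scope ring_scope.

Definition scons (T : Type) (k : nat) (a : T) (f : 'I_k -> T) : 'I_k.+1 -> T :=
  fun t => match unlift ord0 t with None => a | Some t' => f t' end.

Definition blk (n k : nat) (mu : 'I_k.+1 -> {set 'I_n}) (i : 'I_n) : 'I_k.+1 :=
  odflt ord0 [pick t | i \in mu t].

Definition ord_partition (n k : nat) (mu : 'I_k.+1 -> {set 'I_n}) : Prop :=
  (forall t t', t != t' -> [disjoint mu t & mu t']) /\
  (\bigcup_(t < k.+1) mu t = [set: 'I_n]).

(* F_mu(r_0,...,r_k) = sum over 1 <= j_1 < ... < j_n <= N of prod_i w_i(j_i),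
   with w_i = r_t for i in mu_t.  Coordinates are 0-indexed. *)
Definition Fmu (R : comRingType) (n N k : nat) (mu : 'I_k.+1 -> {set 'I_n})
    (r : 'I_k.+1 -> 'rV[R]_N) : R :=
  \sum_(j : {ffun 'I_n -> 'I_N} |
        [forall i : 'I_n, forall i' : 'I_n, (i < i')%N ==> (j i < j i')%N])
    \prod_(i < n) r (blk mu i) 0 (j i).

From mathcomp Require Import all_boot all_order all_algebra.
Set Implicit Arguments. Unset Strict Implicit. Unset Printing Implicit Defensive.
Import GRing.Theory.
Local Open Scope ring_scope.

(* Both sides are sums over the same increasing maps j, so it suffices to
   compare the summands for a fixed j.  There the weight of i is x + z on
   lam_0 and independent of the first argument elsewhere, so expanding the
   product over lam_0 gives one term for each subset A of lam_0 (x on A, z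
   on lam_0 \ A); the term A = lam_0 is P x, and every other term is the
   j-summand of F for the partition (A, lam_0 \ A, lam_1, ..., lam_k). *)

Lemma scons0 T k (a : T) (f : 'I_k -> T) : scons a f ord0 = a.
Proof. by rewrite /scons unlift_none. Qed.

Lemma scons_lift T k (a : T) (f : 'I_k -> T) t : scons a f (lift ord0 t) = f t.
Proof. by rewrite /scons liftK. Qed.

Lemma blk_eq n k (mu : 'I_k.+1 -> {set 'I_n}) i t :
  (forall s, (i \in mu s) = (s == t)) -> blk mu i = t.
Proof.
move=> mu_i; rewrite /blk; case: pickP => [s|] /=; first by rewrite mu_i => /eqP.
by move=> /(_ t); rewrite mu_i eqxx.
Qed.

Section Blocks.
Variables (n k : nat) (mu : 'I_k.+1 -> {set 'I_n}).
Hypothesis mu_part : ord_partition mu.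

Lemma mem_blk i t : (i \in mu t) = (blk mu i == t).
Proof.
have [mu_disj mu_cover] := mu_part.
have /bigcupP[t0 _ i_t0] : i \in \bigcup_(t < k.+1) mu t by rewrite mu_cover inE.
have t0_uniq s : (i \in mu s) = (s == t0).
  apply/idP/eqP => [i_s|-> //]; apply/eqP; apply: contraTT i_t0 => s_t0.
  by rewrite (disjointFr (mu_disj _ _ s_t0) i_s).
by rewrite (blk_eq t0_uniq) t0_uniq eq_sym.
Qed.

Lemma scons_blk T (a b : T) (f : 'I_k -> T) i :
  scons a f (blk mu i) = if i \in mu ord0 then a else scons b f (blk mu i).
Proof.
rewrite mem_blk; case: (unliftP ord0 (blk mu i)) => [t|] ->; last by rewrite eqxx scons0.
by rewrite eq_sym (negbTE (neq_lift _ _)) !scons_lift.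
Qed.

Lemma blk_split (A : {set 'I_n}) i : A \subset mu ord0 ->
  blk (scons A (scons (mu ord0 :\: A) (fun t : 'I_k => mu (lift ord0 t)))) i
  = if i \in A then ord0 else lift ord0 (blk mu i).
Proof.
move=> sA; apply: blk_eq => s.
have mem_tail t : (i \in scons (mu ord0 :\: A) (fun t : 'I_k => mu (lift ord0 t)) t)
                  = (i \notin A) && (blk mu i == t).
  case: (unliftP ord0 t) => [t'|] ->; rewrite ?scons0 ?scons_lift ?inE mem_blk //.
  case: (boolP (i \in A)) => // /(subsetP sA); rewrite mem_blk => /eqP ->.
  by apply/negbTE; exact: neq_lift.
case: (unliftP ord0 s) => [s'|] ->; rewrite ?scons0 ?scons_lift ?mem_tail.
  case: (i \in A) => /=; first by apply/esym/negbTE; rewrite eq_sym; exact: neq_lift.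
  by rewrite (inj_eq lift_inj) eq_sym.
case: (i \in A) => //; apply/esym/negbTE; exact: neq_lift.
Qed.

End Blocks.

Section ProdAddOnSubset.
Variables (R : comRingType) (I : finType) (S : {set I}) (f g h : I -> R).

Lemma prod_add_on_subset :
  \prod_i (if i \in S then f i + g i else h i)
  = \sum_(A : {set I} | A \subset S)
      \prod_i (if i \in A then f i else if i \in S then g i else h i).
Proof.
pose F i := if i \in S then f i else 0.
pose G i := if i \in S then g i else h i.
rewrite (eq_bigr (fun i => F i + G i)); last first.
  by move=> i _; rewrite /F /G; case: ifP; rewrite ?add0r.
rewrite bigA_distr (bigID (fun A : {set I} => A \subset S)) /= [X in _ + X]big1 ?addr0.
  apply: eq_bigr => A sAS; apply: eq_bigr => i _; rewrite /F /G.
  by case: ifP => // /(subsetP sAS) ->.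
by move=> A /subsetPn [i Ai Si']; rewrite (bigD1 i) //= Ai /F (negbTE Si') mul0r.
Qed.

Lemma prod_add_on_subset_sub :
  \prod_i (if i \in S then f i + g i else h i) - \prod_i (if i \in S then f i else h i)
  = \sum_(A : {set I} | A \proper S)
      \prod_i (if i \in A then f i else if i \in S then g i else h i).
Proof.
rewrite prod_add_on_subset (bigD1 S) //=.
have -> : \prod_i (if i \in S then f i else if i \in S then g i else h i)
          = \prod_i (if i \in S then f i else h i) by apply: eq_bigr => i _; case: (i \in S).
by rewrite addrC addrK; apply: eq_bigl => A; rewrite properEneq andbC.
Qed.

End ProdAddOnSubset.

Theorem lemma2p1 (p : nat) (pp : prime p) (n N k : nat) (nN : (n <= N)%N)
    (lam : 'I_k.+1 -> {set 'I_n}) (hlam : ord_partition lam)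
    (y : 'I_k -> 'rV['F_p]_N) (z x : 'rV['F_p]_N) :
  let P := fun v : 'rV['F_p]_N => Fmu lam (scons v y) in
  P (x + z) - P x =
  \sum_(A : {set 'I_n} | A \proper lam ord0)
     Fmu (scons A (scons (lam ord0 :\: A) (fun t : 'I_k => lam (lift ord0 t))))
         (scons x (scons z y)).
Proof.
move=> P; rewrite /P /Fmu -sumrB exchange_big /=; apply: eq_bigr => j _.
set L0 := lam ord0.
pose c i := scons x y (blk lam i) 0 (j i).
have weight v i : scons v y (blk lam i) 0 (j i) = if i \in L0 then v 0 (j i) else c i.
  by rewrite (scons_blk hlam _ x); case: ifP.
have weight_split (A : {set 'I_n}) i : A \subset L0 ->
    let mu := scons A (scons (L0 :\: A) (fun t : 'I_k => lam (lift ord0 t))) in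
    scons x (scons z y) (blk mu i) 0 (j i)
    = if i \in A then x 0 (j i) else if i \in L0 then z 0 (j i) else c i.
  move=> sA mu; rewrite blk_split //; case: ifP => _; first by rewrite scons0.
  by rewrite scons_lift weight.
under eq_bigr => i _ do rewrite weight mxE.
under [X in _ - X]eq_bigr => i _ do rewrite weight.
under [RHS]eq_bigr => A /proper_sub sA do under eq_bigr => i _ do rewrite weight_split //.
exact: (prod_add_on_subset_sub L0 (fun i => x 0 (j i)) (fun i => z 0 (j i)) c).
Qed.
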